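(* If a non-failed Boolean CSP is closed under the applications of (each of) the rules of the proof system BOOL', then it is hyper-arc consistent.
   Context: A Boolean CSP is $\langle \mathcal C; x_1\in D_1,\dots,x_n\in D_n\rangle$ with $D_i\subseteq\{0,1\}$ and $\mathcal C$ a finite set of Boolean constraints, each of the forms $u=v$ ($\{(0,0),(1,1)\}$), $\neg u=v$ ($\{(0,1),(1,0)\}$), $u\wedge v=w$ ($\{(0,0,0),(0,1,0),(1,0,0),(1,1,1)\}$), $u\vee v=w$ ($\{(0,0,0),(0,1,1),(1,0,1),(1,1,1)\}$) on distinct variables; constraints are always understood as restricted to the current domains. $x=d$ means $x\in\{d\}$. A CSP is failed if some domain is empty. A constraint is solved if it equals the product of the domains of its variables; $\phi$ is a reformulation of $\psi$ if removing solved constraints from both yields the same CSP. The proof system BOOL' consists of the rules (constraint, premise $\rightarrow$ conclusion; $x,y,z$ schematic): EQU1: $x=y$, $x=1\rightarrow y=1$; EQU2: $x=y$, $y=1\rightarrow x=1$; EQU3: $x=y$, $x=0\rightarrow y=0$; EQU4: $x=y$, $y=0\rightarrow x=0$; NOT1: $\neg x=y$, $x=1\rightarrow y=0$; NOT2: $\neg x=y$, $x=0\rightarrow y=1$; NOT3: $\neg x=y$, $y=1\rightarrow x=0$; NOT4: $\neg x=y$, $y=0\rightarrow x=1$; AND1': $x\wedge y=z$, $x=1\rightarrow$ constraint $y=z$; AND2': $x\wedge y=z$, $y=1\rightarrow$ constraint $x=z$; AND3': $x\wedge y=z$, $z=1\rightarrow x=1$; AND4: $x\wedge y=z$, $x=0\rightarrow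 z=0$; AND5: $x\wedge y=z$, $y=0\rightarrow z=0$; AND6': $x\wedge y=z$, $z=1\rightarrow y=1$; OR1: $x\vee y=z$, $x=1\rightarrow z=1$; OR2': $x\vee y=z$, $x=0\rightarrow$ constraint $y=z$; OR3': $x\vee y=z$, $y=0\rightarrow$ constraint $x=z$; OR4': $x\vee y=z$, $z=0\rightarrow x=0$; OR5: $x\vee y=z$, $y=1\rightarrow z=1$; OR6': $x\vee y=z$, $z=0\rightarrow y=0$. On CSPs: a rule with constraint $c$ and premise $X=s$ is applicable to a CSP containing (an instance of) $c$ in which each variable of $X$ has domain exactly $\{s_i\}$. If the conclusion is $Y=t$, the result removes $c$ and replaces the domain $D$ of each $y_j\in Y$ by $D\cap\{t_j\}$; if the conclusion is a constraint, the result replaces $c$ by that equality constraint (on the corresponding variables) and leaves domains unchanged. An application is relevant if its result is not a reformulation of the original CSP. A CSP is closed under the applications of a rule $R$ if $R$ cannot be applied or no application of it is relevant. A constraint is hyper-arc consistent if for every variable of it each value in its domain participates in a solution to the constraint (restricted to current domains); a CSP is hyper-arc consistent if every constraint of it is. *)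

From HB Require Import structures.
From mathcomp Require Import all_boot.
Set Implicit Arguments. Unset Strict Implicit. Unset Printing Implicit Defensive.

Section BoolCSP.
Variable n : nat.
Notation var := 'I_n.

(* The four constraint forms:
   CEq u v    :  u = v
   CNot u v   :  ~ u = v
   CAnd u v w :  u /\ v = w
   COr u v w  :  u \/ v = w *)
Inductive cons :=
| CEq of var & var
| CNot of var & var
| CAnd of var & var & var
| COr of var & var & var.

Definition cons_eq_dec : comparable cons.
Proof. move=> a b; rewrite /decidable; decide equality; exact: eq_comparable. Defined.
HB.instance Definition _ := hasDecEq.Build cons (compareP cons_eq_dec).

Definition scope (c : cons) : seq var :=
  match c with
  | CEq u v | CNot u v => [:: u; v]
  | CAnd u v w | COr u v w => [:: u; v; w]
  end.

Definition rel (c : cons) : seq (seq bool) :=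
  match c with
  | CEq _ _ => [:: [:: false; false]; [:: true; true]]
  | CNot _ _ => [:: [:: false; true]; [:: true; false]]
  | CAnd _ _ _ => [:: [:: false; false; false]; [:: false; true; false];
                      [:: true; false; false]; [:: true; true; true]]
  | COr _ _ _ => [:: [:: false; false; false]; [:: false; true; true];
                     [:: true; false; true]; [:: true; true; true]]
  end.

(* A Boolean CSP: a finite set of constraints (a list, read as a set) and domains *)
Record csp := CSP { cstrs : seq cons; doms : var -> {set bool} }.

Definition wf_csp (P : csp) : Prop := forall c, c \in cstrs P -> uniq (scope c).

Definition failed (P : csp) : Prop := exists x, doms P x = set0.

Definition in_doms (D : var -> {set bool}) (s : seq var) (t : seq bool) : bool :=
  all2 (fun x b => b \in D x) s t.

(* solved: the restricted relation equals the product of the domains,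
   i.e. every tuple of the product belongs to the relation *)
Definition solved (D : var -> {set bool}) (c : cons) : Prop :=
  forall t, in_doms D (scope c) t -> t \in rel c.

(* phi is a reformulation of psi: after removing solved constraints from both,
   they are the same CSP (same domains and same set of constraints) *)
Definition reformulation (phi psi : csp) : Prop :=
  (forall x, doms phi x = doms psi x) /\
  (forall c, (c \in cstrs phi /\ ~ solved (doms phi) c) <->
             (c \in cstrs psi /\ ~ solved (doms psi) c)).

Definition hac_cons (D : var -> {set bool}) (c : cons) : Prop :=
  forall x d, x \in scope c -> d \in D x ->
    exists2 t, t \in rel c & in_doms D (scope c) t && (nth false t (index x (scope c)) == d).

Definition hyper_arc_consistent (P : csp) : Prop :=
  forall c, c \in cstrs P -> hac_cons (doms P) c.

Inductive rule :=
| EQU1 | EQU2 | EQU3 | EQU4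
| NOT1 | NOT2 | NOT3 | NOT4
| AND1' | AND2' | AND3' | AND4 | AND5 | AND6'
| OR1 | OR2' | OR3' | OR4' | OR5 | OR6'.

(* conclusion: either a list of variable assignments Y = t, or a new constraint *)
Inductive concl := CDom of seq (var * bool) | CCons of cons.

Definition rule_inst (r : rule) (c : cons) : option (seq (var * bool) * concl) :=
  match r, c with
  | EQU1, CEq x y => Some ([:: (x, true)], CDom [:: (y, true)])
  | EQU2, CEq x y => Some ([:: (y, true)], CDom [:: (x, true)])
  | EQU3, CEq x y => Some ([:: (x, false)], CDom [:: (y, false)])
  | EQU4, CEq x y => Some ([:: (y, false)], CDom [:: (x, false)])
  | NOT1, CNot x y => Some ([:: (x, true)], CDom [:: (y, false)])
  | NOT2, CNot x y => Some ([:: (x, false)], CDom [:: (y, true)])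
  | NOT3, CNot x y => Some ([:: (y, true)], CDom [:: (x, false)])
  | NOT4, CNot x y => Some ([:: (y, false)], CDom [:: (x, true)])
  | AND1', CAnd x y z => Some ([:: (x, true)], CCons (CEq y z))
  | AND2', CAnd x y z => Some ([:: (y, true)], CCons (CEq x z))
  | AND3', CAnd x y z => Some ([:: (z, true)], CDom [:: (x, true)])
  | AND4, CAnd x y z => Some ([:: (x, false)], CDom [:: (z, false)])
  | AND5, CAnd x y z => Some ([:: (y, false)], CDom [:: (z, false)])
  | AND6', CAnd x y z => Some ([:: (z, true)], CDom [:: (y, true)])
  | OR1, COr x y z => Some ([:: (x, true)], CDom [:: (z, true)])
  | OR2', COr x y z => Some ([:: (x, false)], CCons (CEq y z))
  | OR3', COr x y z => Some ([:: (y, false)], CCons (CEq x z))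
  | OR4', COr x y z => Some ([:: (z, false)], CDom [:: (x, false)])
  | OR5, COr x y z => Some ([:: (y, true)], CDom [:: (z, true)])
  | OR6', COr x y z => Some ([:: (z, false)], CDom [:: (y, false)])
  | _, _ => None
  end.

Definition applicable (r : rule) (c : cons) (P : csp) : Prop :=
  c \in cstrs P /\
  exists prem cl, rule_inst r c = Some (prem, cl) /\
    all (fun p => doms P p.1 == [set p.2]) prem.

Definition restrict_doms (D : var -> {set bool}) (ys : seq (var * bool)) : var -> {set bool} :=
  foldr (fun p D' => fun y => if y == p.1 then D' y :&: [set p.2] else D' y) D ys.

Definition apply_concl (c : cons) (cl : concl) (P : csp) : csp :=
  match cl with
  | CDom ys => CSP [seq c' <- cstrs P | c' != c] (restrict_doms (doms P) ys)
  | CCons c2 => CSP (c2 :: [seq c' <- cstrs P | c' != c]) (doms P)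
  end.

Definition apply_rule (r : rule) (c : cons) (P : csp) : csp :=
  match rule_inst r c with
  | Some (_, cl) => apply_concl c cl P
  | None => P
  end.

Definition relevant_application (r : rule) (c : cons) (P : csp) : Prop :=
  ~ reformulation (apply_rule r c P) P.

Definition closed_under (r : rule) (P : csp) : Prop :=
  forall c, applicable r c P -> ~ relevant_application r c P.

End BoolCSP.

From Pilot Require Import Defs.
From mathcomp Require Import all_boot.
From Stdlib Require Import Classical.

Set Implicit Arguments. Unset Strict Implicit. Unset Printing Implicit Defensive.

(* If the premise of some rule holds on a constraint [c], the closure hypothesis
   says that applying the rule, which removes [c], yields a reformulation; hence
   [c] is solved, and a solved constraint over nonempty domains is hyper-arc
   consistent.  If no premise holds, every Boolean domain of [c] being a
   singleton or full, the domains of [c] are forced: both full for [u = v] and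
   [~ u = v]; [u], [v] full and [0 \in D w] for [u /\ v = w]; [u], [v] full and
   [1 \in D w] for [u \/ v = w]; in each case a supporting tuple is exhibited. *)

Lemma set_bool_singleton_or_full (A : {set bool}) :
  A != set0 -> (exists b, A = [set b]) \/ A = setT.
Proof.
case: (boolP (true \in A)) => At; case: (boolP (false \in A)) => Af Ane.
- by right; apply/setP => -[]; rewrite inE.
- by left; exists true; apply/setP => -[]; rewrite inE //; apply/negbTE.
- by left; exists false; apply/setP => -[]; rewrite inE //; apply/negbTE.
- by case/set0Pn: Ane => -[]; rewrite ?(negbTE At) ?(negbTE Af).
Qed.

Lemma set_bool_notin (A : {set bool}) b : A != set0 -> b \notin A -> A = [set ~~ b].
Proof.
move=> /set_bool_singleton_or_full[[c ->] | ->]; last by rewrite inE.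
by rewrite inE; case: b; case: c.
Qed.

Section BoolDomains.
Variable n : nat.
Variable D : 'I_n -> {set bool}.

Definition fires (r : rule) (c : cons n) : bool :=
  if rule_inst r c is Some (prem, _) then all (fun p => D p.1 == [set p.2]) prem
  else false.

Lemma all2_in_doms_map (s : seq 'I_n) (f : 'I_n -> bool) :
  in_doms D s (map f s) = all (fun x => f x \in D x) s.
Proof. by elim: s => //= x s ->. Qed.

Lemma solved_hac_cons c :
  (forall y, D y != set0) -> solved D c -> hac_cons D c.
Proof.
move=> Dne Dsol x d x_c d_Dx.
(* On a nonempty Boolean domain [D y], the value [true \in D y] lies in [D y]. *)
pose t := map (fun y => if y == x then d else true \in D y) (scope c).
have t_doms : in_doms D (scope c) t.
  rewrite all2_in_doms_map; apply/allP => y _; case: eqP => [-> // | _].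
  have [// | Dy_t] := boolP (true \in D y).
  by rewrite (set_bool_notin (Dne y) Dy_t) inE.
exists t; first exact: Dsol.
by rewrite t_doms /t (nth_map x) ?index_mem // (nth_index x x_c) !eqxx.
Qed.

Lemma hac_cons_by_position c :
  (forall x0 i d, i < size (scope c) -> d \in D (nth x0 (scope c) i) ->
     exists2 t, t \in Defs.rel c & in_doms D (scope c) t && (nth false t i == d)) ->
  hac_cons D c.
Proof.
move=> pos x d x_c; rewrite -{1}(nth_index x x_c).
by apply: pos; rewrite index_mem.
Qed.

Lemma hac_eq u v : D u = setT -> D v = setT -> hac_cons D (CEq u v).
Proof.
move=> Du Dv; apply: hac_cons_by_position => x0 [|[|i]] d //= _ _;
  by exists [:: d; d]; [case: (d) | rewrite Du Dv !inE /= eqxx].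
Qed.

Lemma hac_not u v : D u = setT -> D v = setT -> hac_cons D (CNot u v).
Proof.
move=> Du Dv; apply: hac_cons_by_position => x0 [|[|i]] d //= _ _.
- by exists [:: d; ~~ d]; [case: (d) | rewrite Du Dv !inE /= eqxx].
- by exists [:: ~~ d; d]; [case: (d) | rewrite Du Dv !inE /= eqxx].
Qed.

Lemma hac_and u v w : D u = setT -> D v = setT -> false \in D w ->
  hac_cons D (CAnd u v w).
Proof.
move=> Du Dv Dw; apply: hac_cons_by_position => x0 [|[|[|i]]] d //= _ d_dom.
- by exists [:: d; false; false]; [case: (d) | rewrite Du Dv Dw !inE /= eqxx].
- by exists [:: false; d; false]; [case: (d) | rewrite Du Dv Dw !inE /= eqxx].
- by exists [:: d; d; d]; [case: (d) | rewrite Du Dv d_dom !inE /= eqxx].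
Qed.

Lemma hac_or u v w : D u = setT -> D v = setT -> true \in D w ->
  hac_cons D (COr u v w).
Proof.
move=> Du Dv Dw; apply: hac_cons_by_position => x0 [|[|[|i]]] d //= _ d_dom.
- by exists [:: d; true; true]; [case: (d) | rewrite Du Dv Dw !inE /= eqxx].
- by exists [:: true; d; true]; [case: (d) | rewrite Du Dv Dw !inE /= eqxx].
- by exists [:: d; d; d]; [case: (d) | rewrite Du Dv d_dom !inE /= eqxx].
Qed.

Lemma fires_or_hac_cons c :
  (forall y, D y != set0) -> (exists r, fires r c) \/ hac_cons D c.
Proof.
move=> Dne; have dom y := set_bool_singleton_or_full (Dne y).
case: c => [u v | u v | u v w | u v w].
- have [[b Du] | Du] := dom u.
    by left; exists (if b then EQU1 else EQU3); case: b Du => Du; rewrite /fires /= Du eqxx.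
  have [[b Dv] | Dv] := dom v.
    by left; exists (if b then EQU2 else EQU4); case: b Dv => Dv; rewrite /fires /= Dv eqxx.
  by right; apply: hac_eq.
- have [[b Du] | Du] := dom u.
    by left; exists (if b then NOT1 else NOT2); case: b Du => Du; rewrite /fires /= Du eqxx.
  have [[b Dv] | Dv] := dom v.
    by left; exists (if b then NOT3 else NOT4); case: b Dv => Dv; rewrite /fires /= Dv eqxx.
  by right; apply: hac_not.
- have [[b Du] | Du] := dom u.
    by left; exists (if b then AND1' else AND4); case: b Du => Du; rewrite /fires /= Du eqxx.
  have [[b Dv] | Dv] := dom v.
    by left; exists (if b then AND2' else AND5); case: b Dv => Dv; rewrite /fires /= Dv eqxx.
  have [Dw | /(set_bool_notin (Dne w)) Dw] := boolP (false \in D w).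
    by right; apply: hac_and.
  by left; exists AND3'; rewrite /fires /= Dw eqxx.
- have [[b Du] | Du] := dom u.
    by left; exists (if b then OR1 else OR2'); case: b Du => Du; rewrite /fires /= Du eqxx.
  have [[b Dv] | Dv] := dom v.
    by left; exists (if b then OR5 else OR3'); case: b Dv => Dv; rewrite /fires /= Dv eqxx.
  have [Dw | /(set_bool_notin (Dne w)) Dw] := boolP (true \in D w).
    by right; apply: hac_or.
  by left; exists OR4'; rewrite /fires /= Dw eqxx.
Qed.

End BoolDomains.

Lemma rule_inst_new_cons n r (c c2 : cons n) prem :
  rule_inst r c = Some (prem, CCons c2) -> c2 != c.
Proof. by move=> Er; apply/eqP => Ec; move: Er; rewrite {}Ec; case: r; case: c. Qed.

Lemma closed_fires_solved n (P : csp n) r c :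
  c \in cstrs P -> closed_under r P -> fires (doms P) r c -> solved (doms P) c.
Proof.
rewrite /fires => cP closed_r; case Er: (rule_inst r c) => [[prem cl] |] // premP.
apply: NNPP => unsolved; apply: (closed_r c); first by split; last exists prem, cl.
case=> _ /(_ c) [_ /(_ (conj cP unsolved)) []].
rewrite /apply_rule Er; case: cl Er => [ys | c2] Er /=; first by rewrite mem_filter eqxx.
by rewrite inE mem_filter eqxx eq_sym (negbTE (rule_inst_new_cons Er)).
Qed.

Theorem theorem5 (n : nat) (P : csp n) :
  wf_csp P -> ~ failed P ->
  (forall r : rule, closed_under r P) ->
  hyper_arc_consistent P.
Proof.
move=> _ nonfailed closed c cP.
have Dne y : doms P y != set0 by apply/eqP => Dy; apply: nonfailed; exists y.
have [[r fires_r] | //] := fires_or_hac_cons c Dne.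
exact/(solved_hac_cons Dne)/(closed_fires_solved cP (closed r) fires_r).
Qed.
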